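(* Let $Y(0),Y(1)$ be real potential outcomes and $X$ a random vector in $\mathbb{R}^{d_X}$ with support $\mathcal{X}=\mathcal{X}_0\cup\mathcal{X}_1$, $\mathcal{X}_0\cap\mathcal{X}_1=\emptyset$, with $D=1\{X\in\mathcal{X}_1\}$ and $Y=DY(1)+(1-D)Y(0)$. Fix $q\in[0,1]$. Suppose that for $d\in\{0,1\}$ the function $x\mapsto Q_{Y(d)|X}(q|x)$ is continuous on $\mathcal{X}$, and that for all $x_1,x_2\in\mathcal{X}$, $$Q_{Y(0)|X}(q|x_1)\leq Q_{Y(0)|X}(q|x_2)\iff Q_{Y(1)|X}(q|x_1)\leq Q_{Y(1)|X}(q|x_2).$$ Let $\mathcal{F}=\mathrm{cl}(\mathrm{int}(\mathcal{X}_1))\cap\mathrm{cl}(\mathrm{int}(\mathcal{X}_0))$. Then for each $d\in\{0,1\}$ there is a unique continuous function $g_{d,q}$ on $\mathcal{X}_d\cup\mathcal{F}$ with $g_{d,q}(x)=Q_{Y|X}(q|x)$ for all $x\in\mathcal{X}_d$. Moreover, if for some $d$ and some $x\in\mathcal{X}_d$ there exists $x^*\in\mathcal{F}$ with $Q_{Y|X}(q|x)=g_{d,q}(x^* )$, then $Q_{Y(1-d)|X}(q|x)=g_{1-d,q}(x^* )$ and $Q_{Y(d)|X}(q|x)=g_{d,q}(x^* )$.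
   Context: $Q_{Y(d)|X}(q|x)$ denotes the $q$-th conditional quantile of $Y(d)$ given $X=x$ (the continuous version); for $x\in\mathcal{X}_d$, $Q_{Y|X}(q|x)$ is understood as $Q_{Y(d)|X}(q|x)$. *)

From HB Require Import structures.
From mathcomp Require Import all_boot all_order all_algebra.
From mathcomp Require Import all_classical all_reals all_analysis.
Set Implicit Arguments. Unset Strict Implicit. Unset Printing Implicit Defensive.
Import Order.TTheory GRing.Theory Num.Theory.
Import numFieldNormedType.Exports.
Local Open Scope classical_set_scope.
Local Open Scope ring_scope.

Definition frontierF {R : realType} {n : nat} (X0 X1 : set 'rV[R]_n) : set 'rV[R]_n :=
  closure (interior X1) `&` closure (interior X0).

Definition Xreg {R : realType} {n : nat} (X0 X1 : set 'rV[R]_n) (d : bool) : set 'rV[R]_n :=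
  if d then X1 else X0.

(* Q_{Y|X}(q|x) for the observed outcome Y = D Y(1) + (1-D) Y(0), D = 1{X ∈ X1}:
   on X_d it is Q_{Y(d)|X}(q|x).  Q d q x stands for Q_{Y(d)|X}(q|x). *)
Definition QYX {R : realType} {n : nat} (X1 : set 'rV[R]_n)
  (Q : bool -> R -> 'rV[R]_n -> R) (q : R) (x : 'rV[R]_n) : R :=
  Q (x \in X1) q x.

From HB Require Import structures.
From mathcomp Require Import all_boot all_order all_algebra.
From mathcomp Require Import all_classical all_reals all_analysis.
Import Order.TTheory GRing.Theory Num.Theory.
Import numFieldNormedType.Exports.
Local Open Scope classical_set_scope.
Local Open Scope ring_scope.

(* The extension is Q_{Y(d)|X}(q|.) itself: it is continuous on all of the
   closed support, and the frontier lies in the closure of X_d, so any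
   continuous function agreeing with it on X_d agrees on the frontier too.
   Since the two quantile functions induce the same preorder on the support,
   they have the same level sets, which gives the transfer across the
   frontier. *)

Lemma closure_sub_closed {T : topologicalType} {A B : set T} :
  closed B -> A `<=` B -> closure A `<=` B.
Proof. by move=> clB AB; rewrite closureE; exact: smallest_sub. Qed.

Lemma continuous_within_closure_eq {T U : topologicalType} {A B : set T}
    {f g : T -> U} :
  hausdorff_space U -> B `<=` A ->
  {within A, continuous f} -> {within A, continuous g} ->
  {in B, f =1 g} -> forall x, A x -> closure B x -> f x = g x.
Proof.
move=> hU BA /subspace_continuousP fc /subspace_continuousP gc fg x Ax clBx.
have BxA : within B (nbhs x) `=>` within A (nbhs x) by exact: within_subset.
have fx : f @ within B (nbhs x) --> f x.
  exact: cvg_trans (cvg_fmap2 BxA) (fc x Ax).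
have gx : g @ within B (nbhs x) --> g x.
  exact: cvg_trans (cvg_fmap2 BxA) (gc x Ax).
have fgx : f @ within B (nbhs x) --> g x.
  exact: cvg_trans (fmap_within_eq _ fg) gx.
(* [within B (nbhs x)] is a proper filter because [closure B x]. *)
exact: cvg_unique fx fgx.
Qed.

Lemma eq_iff_of_le_iff {disp : Order.disp_t} {R : porderType disp} {T : Type}
    {S : set T} {f g : T -> R} :
  (forall x y, S x -> S y -> (f x <= f y)%O <-> (g x <= g y)%O) ->
  forall x y, S x -> S y -> f x = f y <-> g x = g y.
Proof.
move=> fg x y Sx Sy.
by split=> e; apply/le_anti/andP; split; apply/fg; rewrite // e.
Qed.

Lemma frontierF_sub_closure_Xreg {R : realType} {n : nat}
    (X0 X1 : set 'rV[R]_n) (d : bool) :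
  frontierF X0 X1 `<=` closure (Xreg X0 X1 d).
Proof.
by case: d => x [clX1 clX0]; apply: (closureS (@interior_subset _ _)).
Qed.

Lemma QYX_Xreg {R : realType} {n : nat} {X0 X1 : set 'rV[R]_n}
    (Q : bool -> R -> 'rV[R]_n -> R) (q : R) (d : bool) :
  X0 `&` X1 = set0 -> {in Xreg X0 X1 d, QYX X1 Q q =1 Q d q}.
Proof.
move=> X01 x /set_mem; rewrite /QYX; case: d => /= Xx; first by rewrite mem_set.
suff /negbTE -> : x \notin X1 by [].
by apply/negP => /set_mem X1x; rewrite -[False]/(set0 x) -X01.
Qed.

Theorem theoremB1 (R : realType) (dX : nat)
  (Xs X0 X1 : set 'rV[R]_dX) (Q : bool -> R -> 'rV[R]_dX -> R) (q : R) :
  closed Xs ->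
  Xs = X0 `|` X1 ->
  X0 `&` X1 = set0 ->
  0 <= q <= 1 ->
  (forall d : bool, {within Xs, continuous (Q d q)}) ->
  (forall x1 x2, Xs x1 -> Xs x2 ->
     (Q false q x1 <= Q false q x2 <-> Q true q x1 <= Q true q x2)) ->
  exists g : bool -> 'rV[R]_dX -> R,
    (forall d : bool,
       {within Xreg X0 X1 d `|` frontierF X0 X1, continuous (g d)} /\
       (forall x, Xreg X0 X1 d x -> g d x = QYX X1 Q q x) /\
       (forall h : 'rV[R]_dX -> R,
          {within Xreg X0 X1 d `|` frontierF X0 X1, continuous h} ->
          (forall x, Xreg X0 X1 d x -> h x = QYX X1 Q q x) ->
          forall x, (Xreg X0 X1 d `|` frontierF X0 X1) x -> h x = g d x)) /\
    (forall (d : bool) (x xs : 'rV[R]_dX),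
       Xreg X0 X1 d x -> frontierF X0 X1 xs ->
       QYX X1 Q q x = g d xs ->
       Q (~~ d) q x = g (~~ d) xs /\ Q d q x = g d xs).
Proof.
move=> clXs XsE X01 _ Qc Qmono.
have XregXs d : Xreg X0 X1 d `<=` Xs.
  by rewrite XsE; case: d => x Xx; [right | left].
have FXs : frontierF X0 X1 `<=` Xs.
  move=> x /(frontierF_sub_closure_Xreg X0 X1 true).
  exact: (closure_sub_closed clXs (XregXs true)).
have Qdc d : {within Xreg X0 X1 d `|` frontierF X0 X1, continuous (Q d q)}.
  by apply: continuous_subspaceW (Qc d); rewrite subUset.
have QYXE d x : Xreg X0 X1 d x -> QYX X1 Q q x = Q d q x.
  by move=> Xx; rewrite (QYX_Xreg Q q d X01) ?inE.
exists (fun d => Q d q); split=> [d | d x xs Xx Fxs].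
  split; first exact: Qdc.
  split=> [x /QYXE -> // | h hc hE x Ax].
  apply: (continuous_within_closure_eq (B := Xreg X0 X1 d) (@Rhausdorff R)
           _ hc (Qdc d) _ x Ax).
  - by move=> y Xy; left.
  - by move=> y /set_mem Xy; rewrite hE // (QYXE d).
  - by case: Ax => [/subset_closure | /frontierF_sub_closure_Xreg].
rewrite (QYXE d) // => Qxxs; split=> //.
have Qsame := eq_iff_of_le_iff Qmono _ _ (XregXs d x Xx) (FXs xs Fxs).
by case: d {Xx} Qxxs => /= Qxxs; apply/Qsame.
Qed.
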